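(* Let $\mathcal{N}>0$ be real, $n\ge0$ an integer, and put $\nu=\mathcal{N}+\tfrac12-n$. Then \[ \mathcal{H}_{n}^{\mathcal{N}}\!\left(X\sqrt{\mathcal{N}}\right)=\alpha_{n,\nu}\,n!\left(\frac{\nu}{\mathcal{N}}\right)^{\frac{n}{2}}\left(1+X^{2}\right)^{\frac{n}{2}}\,\mathcal{C}_{n}^{\nu}\!\left(\frac{X\sqrt{\nu}}{\sqrt{1+X^{2}}}\right), \qquad \alpha_{n,\nu}=\frac{(2\nu)_n}{2^n\,n!\,(\nu+\frac12)_n}. \]
   Context: $(a)_n=a(a+1)\cdots(a+n-1)$ denotes the Pochhammer symbol. For $\mathcal{N}>0$ and integer $n\ge0$, the Cari\~{n}ena polynomial with positive parameter is \[ \mathcal{H}_n^{\mathcal{N}}(X)=(-1)^n\left(1+\frac{X^2}{\mathcal{N}}\right)^{\mathcal{N}+\frac12}\frac{d^n}{dX^n}\left(1+\frac{X^2}{\mathcal{N}}\right)^{n-\mathcal{N}-\frac12}. \] For a real parameter $\nu\neq0$, the Cari\~{n}ena polynomial with parameter $-\nu$ is \[ \mathcal{C}_n^{\nu}(X)=(-1)^n\left(1-\frac{X^2}{\nu}\right)^{\frac12-\nu}\frac{d^n}{dX^n}\left(1-\frac{X^2}{\nu}\right)^{n+\nu-\frac12}. \] Both sides of the claimed identity are regarded as functions (polynomial expressions) in $X$. *)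

From HB Require Import structures.
From mathcomp Require Import all_boot all_order all_algebra.
From mathcomp Require Import all_classical all_reals.
From mathcomp Require Import interval_inference topology normedtype derive exp.
From mathcomp Require Import complex.
Set Implicit Arguments. Unset Strict Implicit. Unset Printing Implicit Defensive.
Import Order.TTheory GRing.Theory Num.Theory.
Local Open Scope ring_scope.

Definition pochhammer {R : pzRingType} (a : R) (n : nat) : R :=
  \prod_(i < n) (a + i%:R).

Section Carinena.
Variable R : realType.

Definition carinenaH (n : nat) (N : R) (X : R) : R :=
  (-1) ^+ n * (1 + X ^+ 2 / N) `^ (N + 2^-1)
  * @derive1n R R^o n (fun Y : R => (1 + Y ^+ 2 / N) `^ (n%:R - N - 2^-1)) X.

(* Rodrigues expression for parameter -nu:
   (-1)^n (1 - X^2/nu)^(1/2-nu) d^n/dX^n (1 - X^2/nu)^(n+nu-1/2),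
   meaningful on the open set where 1 - X^2/nu > 0. *)
Definition carinenaC_rod (n : nat) (nu : R) (X : R) : R :=
  (-1) ^+ n * (1 - X ^+ 2 / nu) `^ (2^-1 - nu)
  * @derive1n R R^o n (fun Y : R => (1 - Y ^+ 2 / nu) `^ (n%:R + nu - 2^-1)) X.

(* The Carinena polynomial C_n^nu as a polynomial: the polynomial that agrees
   with the Rodrigues expression wherever that expression is defined
   (1 - X^2/nu > 0, a nonempty open interval, so it is unique if it exists). *)
Definition carinenaC (n : nat) (nu : R) : {poly R} :=
  xget 0 [set p : {poly R} |
           forall X : R, 0 < 1 - X ^+ 2 / nu -> p.[X] = carinenaC_rod n nu X].

Definition alpha (n : nat) (nu : R) : R :=
  pochhammer (2 * nu) n / (2 ^+ n * n`!%:R * pochhammer (nu + 2^-1) n).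

End Carinena.

From HB Require Import structures.
From mathcomp Require Import all_boot all_order all_algebra.
From mathcomp Require Import all_classical all_reals.
From mathcomp Require Import interval_inference topology normedtype derive exp.
From mathcomp Require Import complex realfun ring lra zify.
Set Implicit Arguments. Unset Strict Implicit. Unset Printing Implicit Defensive.
Import Order.TTheory GRing.Theory Num.Theory.
Local Open Scope ring_scope.

(* Both Rodrigues formulas differentiate a power of a quadratic g = 1 + c X^2
   (c = 1/N, resp. c = -1/nu), and d^k g^a = P_k g^(a-k) for a polynomial P_k
   obeying a first-order recursion.  For H (exponent a = -nu) the recursion is
   solved in the monomials X^(n-2j), for C (exponent a = N) in the products
   X^(n-2j) g^j.  Under the substitution z = X sqrt(nu)/sqrt(1+X^2) one has
   1 - z^2/nu = 1/(1+X^2), so the second expansion becomes a polynomial in X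
   again, and the two coefficient families agree up to the factor alpha n!
   because (nu+1/2)_n = (nu+1/2)_j * N (N-1) ... (N-n+j+1). *)

Section RodriguesPolynomials.
Variable F : numFieldType.
Implicit Types (a c x : F) (p : {poly F}).

Definition falling x (m : nat) : F := \prod_(i < m) (x - i%:R).

Lemma fallingSr x m : falling x m.+1 = falling x m * (x - m%:R).
Proof. by rewrite /falling big_ord_recr. Qed.

Lemma fallingSl x m : falling (x + 1) m.+1 = (x + 1) * falling x m.
Proof.
rewrite /falling big_ord_recl subr0; congr (_ * _); apply: eq_bigr => i _.
by rewrite /bump /= -natr1; ring.
Qed.

Lemma falling_nat_small (k m : nat) : (k < m)%N -> falling k%:R m = 0.
Proof. by move=> lt_km; rewrite /falling (bigD1 (Ordinal lt_km)) //= subrr mul0r. Qed.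

Lemma pochhammerSr x m : pochhammer x m.+1 = pochhammer x m * (x + m%:R).
Proof. by rewrite /pochhammer big_ord_recr. Qed.

Lemma pochhammerD x j m :
  pochhammer x (j + m) = pochhammer x j * pochhammer (x + j%:R) m.
Proof.
elim: m => [|m IH]; first by rewrite addn0 /pochhammer big_ord0 mulr1.
by rewrite addnS !pochhammerSr IH natrD mulrA addrA.
Qed.

Lemma pochhammer_falling x m : pochhammer x m = falling (x + m%:R - 1) m.
Proof.
elim: m => [|m IH]; first by rewrite /pochhammer /falling !big_ord0.
have -> : x + m.+1%:R - 1 = (x + m%:R - 1) + 1 by rewrite -natr1; ring.
by rewrite pochhammerSr IH fallingSl subrK mulrC.
Qed.

Lemma pochhammer_neq0_leq x m n :
  (m <= n)%N -> pochhammer x n != 0 -> pochhammer x m != 0.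
Proof. by move/subnKC <-; rewrite pochhammerD mulf_eq0 negb_or => /andP[]. Qed.

Definition quadp c : {poly F} := 1 + c *: 'X^2.

Lemma deriv_quadp c : (quadp c)^`() = (2 * c) *: 'X.
Proof. by rewrite /quadp derivD derivC add0r derivZ derivXn -scaler_nat scalerA mulrC. Qed.

Definition rodrigues_step c a k p : {poly F} :=
  quadp c * p^`() + ((a - k%:R) * 2 * c) *: ('X * p).

Fixpoint rodrigues c a k : {poly F} :=
  if k is k'.+1 then rodrigues_step c a k' (rodrigues c a k') else 1.

Lemma rodrigues_step_sum c a k m (u : nat -> F) (b : nat -> {poly F}) :
  rodrigues_step c a k (\sum_(j < m) u j *: b j)
  = \sum_(j < m) u j *: rodrigues_step c a k (b j).
Proof.
rewrite /rodrigues_step raddf_sum mulr_sumr mulr_sumr scaler_sumr -big_split /=.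
by apply: eq_bigr => j _; rewrite derivZ scalerDr -!scalerAr !scalerA (mulrC (u j)).
Qed.

Section Expansion.
Variables (c a : F) (n : nat) (b : nat -> nat -> {poly F}) (lam u : nat -> nat -> F).
Hypothesis b00 : b 0%N 0%N = 1.
Hypothesis rodrigues_step_basis : forall k j, (2 * j <= k)%N ->
  rodrigues_step c a k (b k j) = (k%:R - 2 * j%:R) *: b k.+1 j.+1 + lam k j *: b k.+1 j.
Hypothesis u00 : u 0%N 0%N = 1.
Hypothesis u_small : forall k j, (k < 2 * j)%N -> u k j = 0.
Hypothesis u_rec0 : forall k, (k < n)%N -> u k.+1 0%N = u k 0%N * lam k 0%N.
Hypothesis u_recS : forall k j, (k < n)%N ->
  u k.+1 j.+1 = u k j * (k%:R - 2 * j%:R) + u k j.+1 * lam k j.+1.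

Lemma rodrigues_expansion k :
  (k <= n)%N -> rodrigues c a k = \sum_(j < k.+1) u k j *: b k j.
Proof.
elim: k => [_|k IH lt_kn]; first by rewrite big_ord1 u00 b00 scale1r.
rewrite /= IH ?rodrigues_step_sum; last exact: ltnW.
have step j : u k j *: rodrigues_step c a k (b k j)
    = (u k j * (k%:R - 2 * j%:R)) *: b k.+1 j.+1 + (u k j * lam k j) *: b k.+1 j.
  have [le_jk|lt_kj] := leqP (2 * j) k.
    by rewrite rodrigues_step_basis // scalerDr !scalerA.
  by rewrite u_small // !mul0r !scale0r addr0.
rewrite (eq_bigr _ (fun (j : 'I_k.+1) _ => step j)).
rewrite big_split /= [X in _ + X = _]big_ord_recl [RHS]big_ord_recl /= u_rec0 //.
under [in RHS]eq_bigr do rewrite /bump /= add1n u_recS // scalerDl.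
rewrite big_split /= [X in _ = _ + (_ + X)]big_ord_recr /= (@u_small k k.+1); last by lia.
rewrite mul0r scale0r addr0 addrCA.
by congr (_ + (_ + _)); apply: eq_bigr => j _; rewrite /bump /= add1n.
Qed.

End Expansion.

Lemma rodrigues_step_monomial c a k j : (2 * j <= k)%N ->
  rodrigues_step c a k 'X^(k - 2 * j)
  = (k%:R - 2 * j%:R) *: 'X^(k.+1 - 2 * j.+1)
    + (c * (k%:R - 2 * j%:R) + (a - k%:R) * 2 * c) *: 'X^(k.+1 - 2 * j).
Proof.
move=> le_jk; have [d ->] : exists d, k = (2 * j + d)%N by exists (k - 2 * j)%N; lia.
have -> : (2 * j + d - 2 * j = d)%N by lia.
have -> : ((2 * j + d).+1 - 2 * j.+1 = d.-1)%N by lia.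
have -> : ((2 * j + d).+1 - 2 * j = d.+1)%N by lia.
have -> : (2 * j + d)%:R - 2 * j%:R = d%:R :> F by rewrite natrD natrM addrC addKr.
rewrite /rodrigues_step /quadp derivXn.
case: d => [|d] /=; first by rewrite mulr0n !mulr0 scale0r !add0r expr0 mulr1 expr1.
by rewrite -mulr_natl -natr1 !exprS -!mul_polyC; ring.
Qed.

Lemma rodrigues_step_quad_monomial c a k j : (2 * j <= k)%N ->
  rodrigues_step c a k ('X^(k - 2 * j) * quadp c ^+ j)
  = (k%:R - 2 * j%:R) *: ('X^(k.+1 - 2 * j.+1) * quadp c ^+ j.+1)
    + (2 * c * j%:R + (a - k%:R) * 2 * c) *: ('X^(k.+1 - 2 * j) * quadp c ^+ j).
Proof.
move=> le_jk; have [d ->] : exists d, k = (2 * j + d)%N by exists (k - 2 * j)%N; lia.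
have -> : (2 * j + d - 2 * j = d)%N by lia.
have -> : ((2 * j + d).+1 - 2 * j.+1 = d.-1)%N by lia.
have -> : ((2 * j + d).+1 - 2 * j = d.+1)%N by lia.
have -> : (2 * j + d)%:R - 2 * j%:R = d%:R :> F by rewrite natrD natrM addrC addKr.
rewrite /rodrigues_step derivM derivXn deriv_exp deriv_quadp -!mul_polyC.
set q := quadp c; clearbody q; clear le_jk.
case: d => [|d]; case: j => [|j] /=;
  rewrite ?mulr0n ?expr0 ?expr1 ?exprS -?natr1; ring.
Qed.

Definition rodrigues_mono_coef nu c k j : F :=
  falling k%:R (2 * j) / j`!%:R * (-1) ^+ (k - j) * 4^-1 ^+ j
  * pochhammer (2 * nu) k / pochhammer (nu + 2^-1) j * c ^+ (k - j).

Definition rodrigues_quad_coef a c k j : F :=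
  falling k%:R (2 * j) / j`!%:R * falling a (k - j) * c ^+ (k - j)
  * 2 ^+ k * 4^-1 ^+ j.

Lemma rodrigues_mono_coef_small nu c k j :
  (k < 2 * j)%N -> rodrigues_mono_coef nu c k j = 0.
Proof. by move=> lt_kj; rewrite /rodrigues_mono_coef falling_nat_small // !mul0r. Qed.

Lemma rodrigues_quad_coef_small a c k j :
  (k < 2 * j)%N -> rodrigues_quad_coef a c k j = 0.
Proof. by move=> lt_kj; rewrite /rodrigues_quad_coef falling_nat_small // !mul0r. Qed.

Lemma rodrigues_mono_coef_rec0 nu c k :
  rodrigues_mono_coef nu c k.+1 0 =
  rodrigues_mono_coef nu c k 0 * (c * (k%:R - 2 * 0%:R) + (- nu - k%:R) * 2 * c).
Proof.
rewrite /rodrigues_mono_coef /pochhammer /falling !big_ord0 !subn0 big_ord_recr /=.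
by rewrite fact0 !expr0 !exprS invr1; ring.
Qed.

Lemma rodrigues_mono_coef_recS nu c k i : pochhammer (nu + 2^-1) k != 0 ->
  rodrigues_mono_coef nu c k.+1 i.+1 =
  rodrigues_mono_coef nu c k i * (k%:R - 2 * i%:R)
  + rodrigues_mono_coef nu c k i.+1 * (c * (k%:R - 2 * i.+1%:R) + (- nu - k%:R) * 2 * c).
Proof.
move=> poch_k; set u := rodrigues_mono_coef nu c.
have [lt_ki|le_ik] := ltnP k (2 * i).+1.
  rewrite [u k.+1 _]rodrigues_mono_coef_small ?[u k i.+1]rodrigues_mono_coef_small; try lia.
  have [lt_k2i|ge_k2i] := ltnP k (2 * i).
    by rewrite [u k i]rodrigues_mono_coef_small // !mul0r addr0.
  have -> : k = (2 * i)%N by lia.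
  by rewrite natrM subrr !mulr0 mul0r addr0.
have /pochhammer_neq0_leq/(_ poch_k) : (i.+1 <= k)%N by lia.
rewrite pochhammerSr mulf_eq0 negb_or => /andP[poch_i nu_i].
have fact_i : (i`!%:R : F) != 0 by rewrite pnatr_eq0 -lt0n fact_gt0.
rewrite /u /rodrigues_mono_coef subSS.
have -> : (k - i = (k - i.+1).+1)%N by lia.
have -> : (2 * i.+1 = (2 * i).+2)%N by lia.
rewrite -natr1 fallingSl !fallingSr !pochhammerSr factS !exprS !natrM -!natr1.
field.
rewrite fact_i add0r (natr1 i) pnatr_eq0 !andbT.
apply/andP; split; last exact: poch_i.
apply: contra nu_i => /eqP eq0; apply/eqP.
have -> : nu + 2^-1 + i%:R = (nu * 2 + 1 + i%:R * 2) / 2 by field.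
by rewrite eq0 mul0r.
Qed.

Lemma rodrigues_quad_coef_rec0 a c k :
  rodrigues_quad_coef a c k.+1 0 =
  rodrigues_quad_coef a c k 0 * (2 * c * 0%:R + (a - k%:R) * 2 * c).
Proof.
rewrite /rodrigues_quad_coef !muln0 !subn0 fallingSr /falling !big_ord0 fact0.
by rewrite !expr0 !exprS invr1; ring.
Qed.

Lemma rodrigues_quad_coef_recS a c k i :
  rodrigues_quad_coef a c k.+1 i.+1 =
  rodrigues_quad_coef a c k i * (k%:R - 2 * i%:R)
  + rodrigues_quad_coef a c k i.+1 * (2 * c * i.+1%:R + (a - k%:R) * 2 * c).
Proof.
set u := rodrigues_quad_coef a c.
have [lt_ki|le_ik] := ltnP k (2 * i).+1.
  rewrite [u k.+1 _]rodrigues_quad_coef_small ?[u k i.+1]rodrigues_quad_coef_small; try lia.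
  have [lt_k2i|ge_k2i] := ltnP k (2 * i).
    by rewrite [u k i]rodrigues_quad_coef_small // !mul0r addr0.
  have -> : k = (2 * i)%N by lia.
  by rewrite natrM subrr !mulr0 mul0r addr0.
have fact_i : (i`!%:R : F) != 0 by rewrite pnatr_eq0 -lt0n fact_gt0.
rewrite /u /rodrigues_quad_coef subSS.
have -> : (k - i = (k - i.+1).+1)%N by lia.
have -> : (2 * i.+1 = (2 * i).+2)%N by lia.
have sub_ki : (k - i.+1)%:R = k%:R - i%:R - 1 :> F.
  by rewrite natrB; [rewrite -natr1; ring | lia].
rewrite -natr1 fallingSl !fallingSr sub_ki factS !exprS !natrM -!natr1.
by field; rewrite fact_i (natr1 i) pnatr_eq0.
Qed.

Lemma rodrigues_mono_expansion c nu n : pochhammer (nu + 2^-1) n != 0 ->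
  rodrigues c (- nu) n = \sum_(j < n.+1) rodrigues_mono_coef nu c n j *: 'X^(n - 2 * j).
Proof.
move=> poch_n.
apply: (rodrigues_expansion (n := n) (b := fun k j => 'X^(k - 2 * j))
  (lam := fun k j => c * (k%:R - 2 * j%:R) + (- nu - k%:R) * 2 * c)
  (u := rodrigues_mono_coef nu c)) => //.
- exact: rodrigues_step_monomial.
- by rewrite /rodrigues_mono_coef /falling /pochhammer !big_ord0 fact0 !expr0; field.
- exact: rodrigues_mono_coef_small.
- by move=> k _; rewrite rodrigues_mono_coef_rec0.
- move=> k j lt_kn; apply: rodrigues_mono_coef_recS.
  exact: pochhammer_neq0_leq (ltnW lt_kn) poch_n.
Qed.

Lemma rodrigues_quad_expansion c a n :
  rodrigues c a n
  = \sum_(j < n.+1) rodrigues_quad_coef a c n j *: ('X^(n - 2 * j) * quadp c ^+ j).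
Proof.
apply: (rodrigues_expansion (n := n) (b := fun k j => 'X^(k - 2 * j) * quadp c ^+ j)
  (lam := fun k j => 2 * c * j%:R + (a - k%:R) * 2 * c)
  (u := rodrigues_quad_coef a c)) => //.
- by rewrite mulr1.
- exact: rodrigues_step_quad_monomial.
- by rewrite /rodrigues_quad_coef /falling !big_ord0 fact0 !expr0; field.
- exact: rodrigues_quad_coef_small.
- by move=> k _; rewrite rodrigues_quad_coef_rec0.
- by move=> k j _; rewrite rodrigues_quad_coef_recS.
Qed.

Lemma rodrigues_mono_coefE_quad_coef N nu n j :
  nu != 0 -> N != 0 -> N = nu + n%:R - 2^-1 -> pochhammer (nu + 2^-1) n != 0 ->
  rodrigues_mono_coef nu N^-1 n j * N ^+ (n - j)
  = pochhammer (2 * nu) n / (2 ^+ n * pochhammer (nu + 2^-1) n)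
    * rodrigues_quad_coef N (- nu^-1) n j * nu ^+ (n - j).
Proof.
move=> nu0 N0 defN poch_n.
have [lt_n2j|le_2jn] := ltnP n (2 * j).
  by rewrite rodrigues_mono_coef_small ?rodrigues_quad_coef_small // !(mul0r, mulr0).
have [m def_n] : exists m, n = (j + m)%N by exists (n - j)%N; lia.
have n_j : (n - j = m)%N by lia.
have poch_split : pochhammer (nu + 2^-1) n = pochhammer (nu + 2^-1) j * falling N m.
  rewrite def_n pochhammerD [pochhammer (_ + j%:R) _]pochhammer_falling defN def_n natrD.
  by congr (_ * falling _ _); field.
move: (poch_n); rewrite poch_split mulf_eq0 negb_or => /andP[poch_j falling_m].
have fact_j : (j`!%:R : F) != 0 by rewrite pnatr_eq0 -lt0n fact_gt0.
rewrite /rodrigues_mono_coef /rodrigues_quad_coef n_j -[- nu^-1]mulN1r !exprMn !exprVn.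
by field; rewrite fact_j falling_m poch_j !expf_neq0 ?pnatr_eq0.
Qed.

Lemma horner_mono_expansion_scaled w x n (u : nat -> F) : w != 0 ->
  (forall j, (n < 2 * j)%N -> u j = 0) ->
  (\sum_(j < n.+1) u j *: 'X^(n - 2 * j)).[x * w]
  = w ^- n * \sum_(j < n.+1) u j * (w ^+ 2) ^+ (n - j) * x ^+ (n - 2 * j).
Proof.
move=> w0 u_small; rewrite horner_sum mulr_sumr; apply: eq_bigr => -[j _] _ /=.
rewrite hornerZ hornerXn; have [lt_n2j|le_2jn] := ltnP n (2 * j).
  by rewrite u_small // !(mul0r, mulr0).
have [d ->] : exists d, n = (2 * j + d)%N by exists (n - 2 * j)%N; lia.
have -> : (2 * j + d - 2 * j = d)%N by lia.
rewrite -exprM (_ : (2 * (2 * j + d - j) = 2 * j + d + d)%N); last by lia.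
by rewrite (exprD w (2 * j + d) d) exprMn; field; rewrite expf_neq0.
Qed.

End RodriguesPolynomials.

Lemma eq_poly_near0 (F : numFieldType) (e : F) (p q : {poly F}) :
  0 < e -> (forall x, `|x| < e -> p.[x] = q.[x]) -> p = q.
Proof.
move=> e_gt0 eq_pq; apply/eqP; rewrite -subr_eq0; apply/eqP.
pose x i := e / i.+2%:R.
have x_gt0 i : 0 < x i by rewrite divr_gt0 ?ltr0n.
apply: (@roots_geq_poly_eq0 _ _ (mkseq x (size (p - q)))); last by rewrite size_mkseq.
- apply/allP => _ /mapP[i _ ->]; rewrite rootE hornerD hornerN eq_pq ?subrr //.
  by rewrite gtr0_norm // ltr_pdivrMr ?ltr0n // ltr_pMr // ltr1n.
- rewrite mkseq_uniq // => i j /(mulfI (lt0r_neq0 e_gt0))/invr_inj/eqP.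
  by rewrite eqr_nat => /eqP[].
Qed.

Section RealRodrigues.
Variable R : realType.
Implicit Types (a b c N nu x : R).

Lemma horner_quadp c x : (quadp c).[x] = 1 + c * x ^+ 2.
Proof. by rewrite /quadp !hornerE. Qed.

Lemma derive1n_quadp_powR c a k x : 0 < (quadp c).[x] ->
  @derive1n R R^o k (fun y => (quadp c).[y] `^ a) x
  = (rodrigues c a k).[x] * (quadp c).[x] `^ (a - k%:R).
Proof.
elim: k x => [|k IH] x gx; first by rewrite derive1n0 hornerC mul1r subr0.
set g := quadp c; set P := rodrigues c a k; set e := a - k%:R.
rewrite derive1nS derive1E (@near_eq_derive _ R^o R^o _ (fun y => P.[y] * g.[y] `^ e)); last first.
  near=> y; apply: IH; near: y.
  exact: (@continuous_horner R g x _ (lt_nbhsr gx)).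
have dgpow : @is_derive R R^o R^o x 1 ((fun y => y `^ e) \o horner g)
    (e * g.[x] `^ (e - 1) * g^`().[x]).
  by apply: is_derive1_comp => //; exact: is_derive1_powR.
have dPg : @is_derive R R^o R^o x 1 (fun y => P.[y] * g.[y] `^ e)
    (P.[x] * (e * g.[x] `^ (e - 1) * g^`().[x]) + g.[x] `^ e * P^`().[x]).
  (* the two values differ by [*:] on [R^o] versus [*], which only conversion sees *)
  by apply: (is_derive_eq (is_deriveM (is_derive_poly P x) dgpow)); reflexivity.
rewrite (@derive_val _ _ _ _ _ _ _ dPg).
have -> : a - k.+1%:R = e - 1 by rewrite -natr1 /e; ring.
have -> : g.[x] `^ e = g.[x] `^ (e - 1) * g.[x].
  rewrite -{3}(powRr1 (ltW gx)) -powRD; first by congr (_ `^ _); ring.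
  by rewrite (gt_eqF gx) implybT.
rewrite /= /rodrigues_step -/g -/P deriv_quadp.
by rewrite !(hornerD, hornerM, hornerZ, hornerX) /e; ring.
Unshelve. all: by end_near. Qed.

Lemma rodrigues_powR c a b k x : 0 < (quadp c).[x] -> b + a - k%:R = 0 ->
  (quadp c).[x] `^ b * @derive1n R R^o k (fun y => (quadp c).[y] `^ a) x
  = (rodrigues c a k).[x].
Proof.
move=> gx ab0; rewrite derive1n_quadp_powR // mulrCA -powRD; last first.
  by rewrite (gt_eqF gx) implybT.
by rewrite addrA ab0 powRr0 mulr1.
Qed.

Lemma carinenaH_rodrigues n N x : 0 < N ->
  carinenaH n N x = (-1) ^+ n * (rodrigues N^-1 (n%:R - N - 2^-1) n).[x].
Proof.
move=> N_gt0; have quadE y : 1 + y ^+ 2 / N = (quadp N^-1).[y].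
  by rewrite horner_quadp mulrC.
have gx : 0 < (quadp N^-1).[x].
  by rewrite -quadE; have := divr_ge0 (sqr_ge0 x) (ltW N_gt0); lra.
rewrite /carinenaH (_ : (fun y => _) = fun y => (quadp N^-1).[y] `^ (n%:R - N - 2^-1)).
  by rewrite quadE -mulrA rodrigues_powR //; ring.
by apply/funext => y; rewrite quadE.
Qed.

Lemma carinenaC_rodrigues n nu : nu != 0 ->
  carinenaC n nu = (-1) ^+ n *: rodrigues (- nu^-1) (n%:R + nu - 2^-1) n.
Proof.
move=> nu0; set p := _ *: _.
have quadE y : 1 - y ^+ 2 / nu = (quadp (- nu^-1)).[y].
  by rewrite horner_quadp mulNr mulrC.
have p_rod x : 0 < 1 - x ^+ 2 / nu -> p.[x] = carinenaC_rod n nu x.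
  move=> gx; rewrite quadE in gx.
  rewrite /carinenaC_rod hornerZ quadE -mulrA.
  rewrite (_ : (fun y => _) = fun y => (quadp (- nu^-1)).[y] `^ (n%:R + nu - 2^-1)).
    by rewrite rodrigues_powR //; ring.
  by apply/funext => y; rewrite quadE.
rewrite /carinenaC; apply: xget_unique => // q q_rod.
apply: (@eq_poly_near0 _ (Num.sqrt `|nu|)) => [|x x_small].
  by rewrite sqrtr_gt0 normr_gt0.
have x2_lt : x ^+ 2 < `|nu|.
  by move: x_small; rewrite -sqrtr_sqr ltr_sqrt ?normr_gt0.
have gx : 0 < 1 - x ^+ 2 / nu.
  have x2E : x ^+ 2 / nu * nu = x ^+ 2 by rewrite mulfVK.
  have := sqr_ge0 x; case: (ltrgtP nu 0) x2_lt => [nu_lt0|nu_gt0|/eqP]; last by rewrite (negPf nu0).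
    by rewrite ltr0_norm //; nra.
  by rewrite gtr0_norm //; nra.
by rewrite q_rod // p_rod.
Qed.

Lemma alpha_mul_fact n nu :
  alpha n nu * n`!%:R = pochhammer (2 * nu) n / (2 ^+ n * pochhammer (nu + 2^-1) n).
Proof.
rewrite /alpha; have [->|poch0] := eqVneq (pochhammer (nu + 2^-1) n) 0.
  by rewrite !mulr0 invr0 !mulr0 mul0r.
by field; rewrite poch0 pnatr_eq0 -lt0n fact_gt0 expf_neq0.
Qed.

Lemma sum_rodrigues_mono_coefE N nu n x :
  nu != 0 -> N != 0 -> N = nu + n%:R - 2^-1 -> pochhammer (nu + 2^-1) n != 0 ->
  \sum_(j < n.+1) rodrigues_mono_coef nu N^-1 n j * N ^+ (n - j) * x ^+ (n - 2 * j)
  = alpha n nu * n`!%:R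
    * \sum_(j < n.+1) rodrigues_quad_coef N (- nu^-1) n j * nu ^+ (n - j) * x ^+ (n - 2 * j).
Proof.
move=> nu0 N0 defN poch_n; rewrite mulr_sumr; apply: eq_bigr => j _.
by rewrite rodrigues_mono_coefE_quad_coef // (alpha_mul_fact n nu) !mulrA.
Qed.

End RealRodrigues.

Section ComplexEvaluation.
Variable R : realType.
Implicit Types (nu x : R).
Local Open Scope complex_scope.

Lemma sqrtC_real x : 0 <= x -> sqrtC x%:C = (Num.sqrt x)%:C.
Proof. by move=> x_ge0; rewrite -{1}(sqr_sqrtr x_ge0) rmorphXn sqrCK // ler0c sqrtr_ge0. Qed.

Lemma real_complex_neq0 x : (x%:C != 0) = (x != 0).
Proof. by rewrite -(rmorph0 (real_complex R)) (inj_eq (@complexI R)). Qed.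

Lemma sqrtC_div_real nu N : 0 < N ->
  sqrtC (nu / N)%:C = sqrtC nu%:C / (Num.sqrt N)%:C.
Proof.
move=> N_gt0; have Ninv_ge0 : 0 <= N^-1 by rewrite invr_ge0 ltW.
by rewrite rmorphM /= rootCMr ?ler0c // (sqrtC_real Ninv_ge0) sqrtrV ?ltW // fmorphV.
Qed.

Lemma horner_map_quadp c (z : R[i]) :
  (map_poly (real_complex R) (quadp c)).[z] = 1 + c%:C * z ^+ 2.
Proof.
rewrite /quadp -mul_polyC rmorphD rmorph1 rmorphM /= map_polyC map_polyXn.
by rewrite hornerD hornerC hornerCM hornerXn.
Qed.

Lemma scaled_quad_monomial nu x j d : nu != 0 ->
  let s := sqrtC nu%:C in let r := sqrtC (1 + x ^+ 2)%:C in
  s ^+ (2 * j + d) * r ^+ (2 * j + d)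
    * ((x%:C * s / r) ^+ d * (1 + (- nu^-1)%:C * (x%:C * s / r) ^+ 2) ^+ j)
  = (nu ^+ (j + d) * x ^+ d)%:C.
Proof.
move=> nu0 s r.
have s2 : s ^+ 2 = nu%:C by exact: sqrtCK.
have r2 : r ^+ 2 = (1 + x ^+ 2)%:C by exact: sqrtCK.
have x2_neq0 : (1 + x ^+ 2)%:C != 0.
  by rewrite real_complex_neq0 gt_eqF //; have := sqr_ge0 x; lra.
have r0 : r != 0 by rewrite sqrtC_eq0.
have quad_z : 1 + (- nu^-1)%:C * (x%:C * s / r) ^+ 2 = (r ^+ 2)^-1.
  rewrite !exprMn exprVn s2 r2 rmorphN fmorphV.
  move: x2_neq0; rewrite rmorphD rmorph1 rmorphXn => x2_neq0.
  by field; rewrite x2_neq0 real_complex_neq0 nu0.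
have sE : s ^+ (2 * j + d) * s ^+ d = nu%:C ^+ (j + d).
  by rewrite -exprD -s2 -exprM; congr (_ ^+ _); lia.
have rE : r ^+ (2 * j + d) * ((r ^+ d)^-1 * ((r ^+ 2) ^+ j)^-1) = 1.
  by rewrite exprD exprM; field; rewrite !expf_neq0.
rewrite quad_z !exprMn !exprVn; transitivity ((s ^+ (2 * j + d) * s ^+ d)
    * (r ^+ (2 * j + d) * ((r ^+ d)^-1 * ((r ^+ 2) ^+ j)^-1)) * x%:C ^+ d).
  by ring.
by rewrite sE rE mulr1 rmorphM !rmorphXn.
Qed.

Lemma horner_quad_expansion_scaled nu x n (q : nat -> R) : nu != 0 ->
  (forall j, (n < 2 * j)%N -> q j = 0) ->
  let s := sqrtC nu%:C in let r := sqrtC (1 + x ^+ 2)%:C in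
  s ^+ n * r ^+ n * (map_poly (real_complex R)
      (\sum_(j < n.+1) q j *: ('X^(n - 2 * j) * quadp (- nu^-1) ^+ j))).[x%:C * s / r]
  = (\sum_(j < n.+1) q j * nu ^+ (n - j) * x ^+ (n - 2 * j))%:C.
Proof.
move=> nu0 q_small s r.
rewrite rmorph_sum horner_sum mulr_sumr rmorph_sum; apply: eq_bigr => -[j _] _ /=.
have [lt_n2j|le_2jn] := ltnP n (2 * j).
  by rewrite q_small // scale0r rmorph0 horner0 mulr0 !mul0r rmorph0.
rewrite -mul_polyC !rmorphM /= map_polyC hornerCM map_polyXn rmorphXn.
rewrite hornerM hornerXn horner_exp horner_map_quadp mulrCA.
have [d ->] : exists d, n = (2 * j + d)%N by exists (n - 2 * j)%N; lia.
have -> : (2 * j + d - 2 * j = d)%N by lia.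
have -> : (2 * j + d - j = j + d)%N by lia.
by rewrite scaled_quad_monomial // -!rmorphM mulrA.
Qed.

End ComplexEvaluation.

Theorem theorem3 (R : realType) (N : R) (n : nat) :
  0 < N ->
  let nu := N + 2^-1 - n%:R in
  nu != 0 ->
  pochhammer (nu + 2^-1) n != 0 ->
  forall X : R,
    (carinenaH n N (X * Num.sqrt N))%:C%C
    = (alpha n nu * n`!%:R)%:C%C
      * sqrtC ((nu / N)%:C%C) ^+ n
      * sqrtC ((1 + X ^+ 2)%:C%C) ^+ n
      * (map_poly (fun r : R => r%:C%C) (carinenaC n nu)).[
          X%:C%C * sqrtC (nu%:C%C) / sqrtC ((1 + X ^+ 2)%:C%C)].
Proof.
move=> N_gt0 nu nu0 poch_n X.
set w := Num.sqrt N; have w_gt0 : 0 < w by rewrite sqrtr_gt0.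
have N0 : N != 0 by rewrite gt_eqF.
rewrite carinenaH_rodrigues // carinenaC_rodrigues // sqrtC_div_real //.
rewrite (_ : n%:R - N - 2^-1 = - nu); last by rewrite /nu; ring.
rewrite (_ : n%:R + nu - 2^-1 = N); last by rewrite /nu; ring.
rewrite rodrigues_mono_expansion // horner_mono_expansion_scaled ?gt_eqF //; last first.
  exact: rodrigues_mono_coef_small.
rewrite sqr_sqrtr ?ltW // sum_rodrigues_mono_coefE //; last by rewrite /nu; ring.
rewrite rodrigues_quad_expansion map_polyZ hornerZ rmorphXn rmorphN1 -/w.
set s := sqrtC nu%:C%C; set r := sqrtC (1 + X ^+ 2)%:C%C.
set P := (map_poly _ _).[_].
have := horner_quad_expansion_scaled X nu0
  (@rodrigues_quad_coef_small _ N (- nu^-1) n).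
rewrite -/s -/r -/P => C_side; move: (alpha n nu * n`!%:R) => A.
rewrite expr_div_n [RHS](_ : _ = A%:C%C * (-1) ^+ n / w%:C%C ^+ n * (s ^+ n * r ^+ n * P)).
  by rewrite C_side !rmorphM rmorphXn rmorphN1 fmorphV rmorphXn; ring.
by ring.
Qed.
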